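(* Let $r\ge3$ and $Y,Z\subseteq\{1,\dots,r-1\}$ with $0\le|Y|<|Z|<r$. For a finite $\Lambda$ write $\sigma_i(\pm\Lambda)$ where $\sigma_i$ is the map defined by $C_\Lambda$ and $\pm\Lambda=\Lambda\cup-\Lambda$, and let $(i\ i{+}1)$ denote the transposition acting on subsets of $\{1,\dots,r-1\}$. Then: for $i=1,\dots,r-2$: $\sigma_i(\pm\Phi_{r,Z})=\pm\Phi_{r,(i\,i+1)(Z)}$, $\sigma_i(\pm\Psi_{r,Y})=\pm\Psi_{r,(i\,i+1)(Y)}$, $\sigma_i(\pm\Psi'_{r,Y})=\pm\Psi'_{r,(i\,i+1)(Y)}$; if $r-1\notin Z$: $\sigma_{r-1}(\pm\Phi_{r,Z})=\sigma_r(\pm\Phi_{r,Z})=\pm\Phi_{r,Z}$; if $r-1\in Z$: $\sigma_{r-1}(\pm\Phi_{r,Z})=\pm\Psi_{r,Z\setminus\{r-1\}}$ and $\sigma_r(\pm\Phi_{r,Z})=\pm\Psi'_{r,Z\setminus\{r-1\}}$; if $r-1\notin Y$: $\sigma_{r-1}(\pm\Psi_{r,Y})=\pm\Phi_{r,Y\cup\{r-1\}}$, $\sigma_r(\pm\Psi_{r,Y})=\pm\Psi_{r,Y}$, $\sigma_r(\pm\Psi'_{r,Y})=\pm\Phi_{r,Y\cup\{r-1\}}$, $\sigma_{r-1}(\pm\Psi'_{r,Y})=\pm\Psi'_{r,Y}$; if $r-1\in Y$: $\sigma_{r-1}(\pm\Psi_{r,Y})=\sigma_r(\pm\Psi_{r,Y})=\pm\Psi_{r,Y}$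 and $\sigma_{r-1}(\pm\Psi'_{r,Y})=\sigma_r(\pm\Psi'_{r,Y})=\pm\Psi'_{r,Y}$.
   Context: In $\mathbb{Z}^r$ with standard basis $\alpha_1,\dots,\alpha_r$ let $\eta_{i,j}=\sum_{k=i}^j\alpha_k$ for $i\le j$, $\eta_{i,j}=0$ for $i>j$. $\Phi_{r,Z}$ ($Z\subseteq\{1,\dots,r-1\}$) consists of $\eta_{i,j-1}$ ($1\le i<j\le r$), $\eta_{i,r-2}+\alpha_r$ ($1\le i<r$), $\eta_{i,r}+\eta_{j,r-2}$ ($1\le i<j<r$), $\eta_{j,r}+\eta_{j,r-2}$ ($j\in Z$). $\Psi_{r,Y}$ consists of $\eta_{i,j}$ ($1\le i\le j\le r$), $\eta_{i,r}+\eta_{j,r-1}$ ($1\le i<j<r$), $\eta_{j,r}+\eta_{j,r-1}$ ($j\in Y$). $\Psi'_{r,Y}$ is obtained from $\Psi_{r,Y}$ by exchanging the coordinates of $\alpha_{r-1}$ and $\alpha_r$. For finite $\Lambda\subseteq\mathbb{Z}^r$, $C_\Lambda=(c_{ij})$ with $c_{ii}=2$, $c_{ij}=-\max\{k\ge0:k\alpha_i+\alpha_j\in\Lambda\}$ ($i\ne j$), and $\sigma_i:\mathbb{Z}^r\to\mathbb{Z}^r$, $\sigma_i(\alpha_j)=\alpha_j-c_{ij}\alpha_i$. *)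

From HB Require Import structures.
From mathcomp Require Import all_boot all_order all_algebra.
Set Implicit Arguments. Unset Strict Implicit. Unset Printing Implicit Defensive.
Import Order.TTheory GRing.Theory Num.Theory.
Local Open Scope ring_scope.

(* Vectors of Z^r are finite functions 'I_r -> int; the
   paper's 1-based coordinate k (1 <= k <= r) is the ordinal l with l.+1 = k. *)
Definition vec (r : nat) := {ffun 'I_r -> int}.

(* coordinate with the paper's 1-based index k (0 if out of range) *)
Definition vat {r} (v : vec r) (k : nat) : int :=
  if insub k.-1 is Some l then (if k == 0%N then 0 else v l) else 0.

Definition alpha r (k : nat) : vec r := [ffun l : 'I_r => ((l.+1 == k) : nat)%:Z].

(* eta_{i,j} = sum_{k=i}^j alpha_k  (= 0 if i > j) *)
Definition eta r (i j : nat) : vec r :=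
  [ffun l : 'I_r => (((i <= l.+1) && (l.+1 <= j))%N : nat)%:Z].

Definition vadd r (u v : vec r) : vec r := [ffun l => u l + v l].
Definition vopp r (u : vec r) : vec r := [ffun l => - u l].
Definition vscale r (k : int) (u : vec r) : vec r := [ffun l => k * u l].

(* subsets Y, Z of {1,...,r-1} are encoded as {set 'I_r} with 0 excluded;
   membership of a 1-based... here the set elements are the numbers val x *)
Definition inS r (Z : {set 'I_r}) (k : nat) : bool := [exists x in Z, val x == k].

Definition swapn (i k : nat) : nat :=
  if k == i then i.+1 else if k == i.+1 then i else k.

Definition tsp r (i : nat) (Z : {set 'I_r}) : {set 'I_r} :=
  [set x : 'I_r | [exists y in Z, swapn i (val y) == val x]].

Definition setDel r (Z : {set 'I_r}) (k : nat) : {set 'I_r} :=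
  [set x in Z | val x != k].
Definition setAdd r (Z : {set 'I_r}) (k : nat) : {set 'I_r} :=
  [set x : 'I_r | (x \in Z) || (val x == k)].

Definition Phi r (Z : {set 'I_r}) : seq (vec r) :=
  [seq eta r i j.-1 | i <- iota 1 r, j <- iota i.+1 (r - i)]
  ++ [seq vadd (eta r i (r - 2)) (alpha r r) | i <- iota 1 (r - 1)]
  ++ [seq vadd (eta r i r) (eta r j (r - 2)) | i <- iota 1 r, j <- iota i.+1 (r - 1 - i)]
  ++ [seq vadd (eta r j r) (eta r j (r - 2)) | j <- iota 1 (r - 1) & inS Z j].

Definition Psi r (Y : {set 'I_r}) : seq (vec r) :=
  [seq eta r i j | i <- iota 1 r, j <- iota i (r.+1 - i)]
  ++ [seq vadd (eta r i r) (eta r j (r - 1)) | i <- iota 1 r, j <- iota i.+1 (r - 1 - i)]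
  ++ [seq vadd (eta r j r) (eta r j (r - 1)) | j <- iota 1 (r - 1) & inS Y j].

Definition xch r (v : vec r) : vec r :=
  [ffun l : 'I_r => vat v (swapn (r - 1) l.+1)].

Definition Psi' r (Y : {set 'I_r}) : seq (vec r) := map (@xch r) (Psi Y).

(* C_Lambda entries, 1-based indices:
   c_ii = 2, c_ij = - max { k >= 0 : k alpha_i + alpha_j \in Lambda }.
   Every such k is the absolute value of a coordinate of an element of
   Lambda, hence k < bound Lambda, so the max over k < bound is the max of
   the whole set (0 if the set is empty). *)
Definition bound r (L : seq (vec r)) : nat :=
  (\sum_(x <- L) \sum_(l : 'I_r) `|x l|)%N.+1.

Definition cartan r (L : seq (vec r)) (i j : nat) : int :=
  if i == j then 2
  else - ((\max_(k < bound L | vadd (vscale k%:Z (alpha r i)) (alpha r j) \in L) k)%N)%:Z.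

(* sigma_i(alpha_j) = alpha_j - c_ij alpha_i, extended linearly *)
Definition sigma r (L : seq (vec r)) (i : nat) (v : vec r) : vec r :=
  [ffun l : 'I_r => v l - (\sum_(m : 'I_r) cartan L i m.+1 * v m) * alpha r i l].

Definition pm r (L : seq (vec r)) : seq (vec r) := L ++ map (@vopp r) L.

Definition sigmaPM r (L : seq (vec r)) (i : nat) : seq (vec r) :=
  map (sigma L i) (pm L).

(* The Cartan matrix of Phi_{r,Z} and of Psi_{r,Y} is read off from which
   vectors k alpha_i + alpha_j they contain.  For Phi it is the diagram D_r
   (the path 1 - ... - r-1 with r attached to r-2), with an extra edge
   r-1 - r when r-1 is in Z; for Psi it is the path 1 - ... - r, with
   c_{r-1,r} = -2 when r-1 is in Y.  So sigma_i is the explicit reflection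
   v |-> v - <v> alpha_i, where <v> involves at most four coordinates of v,
   and sigma_i(Lambda) \subset +-Lambda' is a case analysis on the shape of
   the roots in Lambda.  Since sigma_i is an involution given by the same row
   of the Cartan matrix for Lambda and Lambda', inclusions in both directions
   give sigma_i(+-Lambda) = +-Lambda'.  Finally Psi' is the image of Psi
   under the exchange of the last two coordinates, which fixes Phi and
   conjugates sigma_{r-1} with sigma_r. *)

From mathcomp Require Import all_boot all_order all_algebra.
From mathcomp Require Import zify ring.
Set Implicit Arguments. Unset Strict Implicit. Unset Printing Implicit Defensive.
Import GRing.Theory.
Local Open Scope ring_scope.

(* Case split on every comparison of natural numbers and every [inS _ _]
   occurring in the goal, then close the branches by [lia]; comparisons under
   an [if] are split only once the condition of the [if] is decided. *)
Ltac nat_cases := repeat (match goal with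
  | |- context [(?x == ?y :> nat)] =>
      lazymatch x with context [if _ then _ else _] => fail | _ =>
      lazymatch y with context [if _ then _ else _] => fail | _ =>
      case: (@eqP nat x y) => ? end end
  | |- context [(?x <= ?y)%N] =>
      lazymatch x with context [if _ then _ else _] => fail | _ =>
      lazymatch y with context [if _ then _ else _] => fail | _ =>
      case: (leqP x y) => ? end end
  | |- context [inS ?Z ?k] => case: (inS Z k)
  end; simpl; try done; try (exfalso; lia)); try lia.

Lemma swapnK i : involutive (swapn i).
Proof. by move=> t; rewrite /swapn; nat_cases. Qed.

Section Roots.
Variable r : nat.

(** * Coordinates and the lists of roots *)

Lemma vat_ffun (G : nat -> int) t :
  vat [ffun l : 'I_r => G l.+1] t = if (1 <= t <= r)%N then G t else 0.
Proof.
rewrite /vat; case: t => [|t] /=; first by case: insubP.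
case: insubP => [l lt E|/negbTE ->]; last by [].
by rewrite ffunE E lt.
Qed.

Lemma vat_out (v : vec r) t : ~~ (1 <= t <= r)%N -> vat v t = 0.
Proof.
rewrite /vat; case: t => [|t] /=; first by case: insubP.
by case: insubP => //= l lt E; rewrite -E ltn_ord.
Qed.

Lemma vat_ord (v : vec r) (m : 'I_r) : vat v m.+1 = v m.
Proof.
rewrite /vat /=; case: insubP => [l _ E|]; last by rewrite ltn_ord.
by congr (v _); apply: val_inj.
Qed.

Lemma vec_ext (u v : vec r) : (forall t, (1 <= t <= r)%N -> vat u t = vat v t) -> u = v.
Proof. by move=> H; apply/ffunP => l; rewrite -!vat_ord H ?ltn_ord. Qed.

Lemma vat_eta a b t :
  vat (eta r a b) t = (((1 <= t <= r) && (a <= t <= b))%N : nat)%:Z.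
Proof. by rewrite (vat_ffun (fun t => ((a <= t <= b)%N : nat)%:Z)); case: ifP. Qed.

Lemma vat_alpha k t : vat (alpha r k) t = (((1 <= t <= r) && (t == k))%N : nat)%:Z.
Proof. by rewrite (vat_ffun (fun t => ((t == k)%N : nat)%:Z)); case: ifP. Qed.

Lemma vat_vadd (u v : vec r) t : vat (vadd u v) t = vat u t + vat v t.
Proof. by rewrite /vat; case: insubP => //= *; case: eqP; rewrite ?ffunE. Qed.

Lemma vat_vopp (u : vec r) t : vat (vopp u) t = - vat u t.
Proof. by rewrite /vat; case: insubP => //= *; case: eqP; rewrite ?ffunE. Qed.

Lemma vat_vscale k (u : vec r) t : vat (vscale k u) t = k * vat u t.
Proof.
by rewrite /vat; case: insubP => //= *; rewrite ?mulr0 //; case: eqP; rewrite ?ffunE ?mulr0.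
Qed.

Definition vatE := (vat_eta, vat_alpha, vat_vadd, vat_vopp, vat_vscale).

Lemma voppK : involutive (@vopp r).
Proof. by move=> v; apply/ffunP => l; rewrite !ffunE opprK. Qed.

Lemma mem_pm_l (L : seq (vec r)) v : v \in L -> v \in pm L.
Proof. by rewrite /pm mem_cat => ->. Qed.

Lemma mem_pm_r (L : seq (vec r)) v : v \in L -> vopp v \in pm L.
Proof. by rewrite /pm mem_cat => /(map_f (@vopp r)) ->; rewrite orbT. Qed.

Lemma pm_ind (L : seq (vec r)) (P : vec r -> Prop) :
  (forall v, v \in L -> P v) -> (forall v, v \in L -> P (vopp v)) ->
  forall v, v \in pm L -> P v.
Proof. by move=> H1 H2 v; rewrite /pm mem_cat => /orP[/H1 | /mapP[w /H2 ? ->]]. Qed.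

Lemma mem_pm_vopp (L : seq (vec r)) v : v \in pm L -> vopp v \in pm L.
Proof. by elim/pm_ind => w Hw; [apply: mem_pm_r | rewrite voppK; apply: mem_pm_l]. Qed.

Lemma pm_eq_mem (L1 L2 : seq (vec r)) : L1 =i L2 -> pm L1 =i pm L2.
Proof. by move=> E x; rewrite /pm !mem_cat E (eq_mem_map _ E). Qed.

Lemma mem_pm_vat (L : seq (vec r)) (w g : vec r) : g \in L ->
  (forall t, (1 <= t <= r)%N -> vat w t = vat g t) -> w \in pm L.
Proof. by move=> Hg /vec_ext ->; apply: mem_pm_l. Qed.

Lemma mem_pm_vat_opp (L : seq (vec r)) (w g : vec r) : g \in L ->
  (forall t, (1 <= t <= r)%N -> vat w t = - vat g t) -> w \in pm L.
Proof.
move=> Hg H; have -> : w = vopp g by apply: vec_ext => t Ht; rewrite H // vat_vopp.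
exact: mem_pm_r.
Qed.

Lemma mem_Phi_eta Z a b : (1 <= a <= b)%N -> (b < r)%N -> eta r a b \in Phi Z.
Proof.
move=> *; rewrite /Phi mem_cat; apply/orP; left.
by apply/allpairsPdep; exists a, b.+1; rewrite !mem_iota; split => //; lia.
Qed.

Lemma mem_Phi_fork Z a : (1 <= a < r)%N -> vadd (eta r a (r - 2)) (alpha r r) \in Phi Z.
Proof.
move=> *; rewrite /Phi !mem_cat; apply/or4P; constructor 2.
by apply/mapP; exists a => //; rewrite mem_iota; lia.
Qed.

Lemma mem_Phi_pair Z a b : (1 <= a < b)%N -> (b < r)%N ->
  vadd (eta r a r) (eta r b (r - 2)) \in Phi Z.
Proof.
move=> *; rewrite /Phi !mem_cat; apply/or4P; constructor 3.
by apply/allpairsPdep; exists a, b; rewrite !mem_iota; split => //; lia.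
Qed.

Lemma mem_Phi_double Z b : (1 <= b < r)%N -> inS Z b ->
  vadd (eta r b r) (eta r b (r - 2)) \in Phi Z.
Proof.
move=> *; rewrite /Phi !mem_cat; apply/or4P; constructor 4.
by apply/mapP; exists b; rewrite // mem_filter mem_iota; apply/andP; split => //; lia.
Qed.

Lemma Phi_ind Z (P : vec r -> Prop) :
  (forall a b, (1 <= a <= b)%N -> (b < r)%N -> P (eta r a b)) ->
  (forall a, (1 <= a < r)%N -> P (vadd (eta r a (r - 2)) (alpha r r))) ->
  (forall a b, (1 <= a < b)%N -> (b < r)%N -> P (vadd (eta r a r) (eta r b (r - 2)))) ->
  (forall b, (1 <= b < r)%N -> inS Z b -> P (vadd (eta r b r) (eta r b (r - 2)))) ->
  forall v, v \in Phi Z -> P v.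
Proof.
move=> H1 H2 H3 H4 v; rewrite /Phi !mem_cat => /or4P[].
- by case/allpairsPdep => a [j]; rewrite !mem_iota => -[? ? ->]; apply: H1; lia.
- by case/mapP => a; rewrite mem_iota => ? ->; apply: H2; lia.
- by case/allpairsPdep => a [j]; rewrite !mem_iota => -[? ? ->]; apply: H3; lia.
- by case/mapP => b; rewrite mem_filter mem_iota => /andP[? ?] ->; apply: H4 => //; lia.
Qed.

Lemma mem_Psi_eta Y a b : (1 <= a <= b)%N -> (b <= r)%N -> eta r a b \in Psi Y.
Proof.
move=> *; rewrite /Psi mem_cat; apply/orP; left.
by apply/allpairsPdep; exists a, b; rewrite !mem_iota; split => //; lia.
Qed.

Lemma mem_Psi_pair Y a b : (1 <= a < b)%N -> (b < r)%N ->
  vadd (eta r a r) (eta r b (r - 1)) \in Psi Y.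
Proof.
move=> *; rewrite /Psi !mem_cat; apply/or3P; constructor 2.
by apply/allpairsPdep; exists a, b; rewrite !mem_iota; split => //; lia.
Qed.

Lemma mem_Psi_double Y b : (1 <= b < r)%N -> inS Y b ->
  vadd (eta r b r) (eta r b (r - 1)) \in Psi Y.
Proof.
move=> *; rewrite /Psi !mem_cat; apply/or3P; constructor 3.
by apply/mapP; exists b; rewrite // mem_filter mem_iota; apply/andP; split => //; lia.
Qed.

Lemma Psi_ind Y (P : vec r -> Prop) :
  (forall a b, (1 <= a <= b)%N -> (b <= r)%N -> P (eta r a b)) ->
  (forall a b, (1 <= a < b)%N -> (b < r)%N -> P (vadd (eta r a r) (eta r b (r - 1)))) ->
  (forall b, (1 <= b < r)%N -> inS Y b -> P (vadd (eta r b r) (eta r b (r - 1)))) ->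
  forall v, v \in Psi Y -> P v.
Proof.
move=> H1 H2 H3 v; rewrite /Psi !mem_cat => /or3P[].
- by case/allpairsPdep => a [j]; rewrite !mem_iota => -[? ? ->]; apply: H1; lia.
- by case/allpairsPdep => a [j]; rewrite !mem_iota => -[? ? ->]; apply: H2; lia.
- by case/mapP => b; rewrite mem_filter mem_iota => /andP[? ?] ->; apply: H3 => //; lia.
Qed.

Lemma eq_Phi (Z1 Z2 : {set 'I_r}) :
  (forall t, (t < r)%N -> inS Z1 t = inS Z2 t) -> Phi Z1 = Phi Z2.
Proof.
move=> H; rewrite /Phi; congr (_ ++ _ ++ _ ++ _); congr map.
by apply: eq_in_filter => t; rewrite mem_iota => Ht; apply: H; lia.
Qed.

Lemma eq_Psi (Y1 Y2 : {set 'I_r}) :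
  (forall t, (t < r)%N -> inS Y1 t = inS Y2 t) -> Psi Y1 = Psi Y2.
Proof.
move=> H; rewrite /Psi; congr (_ ++ _ ++ _); congr map.
by apply: eq_in_filter => t; rewrite mem_iota => Ht; apply: H; lia.
Qed.

Lemma inS_tsp (Z : {set 'I_r}) i t : (i.+1 < r)%N -> (t < r)%N ->
  inS (tsp i Z) t = inS Z (swapn i t).
Proof.
move=> Hi Ht; rewrite /inS; apply/existsP/existsP.
  case=> x /andP[]; rewrite inE => /existsP[y /andP[Hy /eqP Ey]] /eqP Ex.
  by exists y; rewrite Hy /= -Ex -Ey swapnK eqxx.
case=> y /andP[Hy /eqP Ey]; exists (Ordinal Ht); rewrite inE /= eqxx andbT.
by apply/existsP; exists y; rewrite Hy Ey swapnK eqxx.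
Qed.

Lemma inS_tspK (Z : {set 'I_r}) i t : (i.+1 < r)%N -> (t < r)%N ->
  inS (tsp i (tsp i Z)) t = inS Z t.
Proof.
by move=> Hi Ht; rewrite inS_tsp // inS_tsp ?swapnK //; rewrite /swapn; nat_cases.
Qed.

Lemma inS_setDel (Z : {set 'I_r}) k t : inS (setDel Z k) t = inS Z t && (t != k).
Proof.
rewrite /inS; apply/existsP/andP.
  case=> x /andP[]; rewrite inE => /andP[Hx Hk] /eqP Ex; subst t; split => //.
  by apply/existsP; exists x; rewrite Hx eqxx.
by case=> /existsP[x /andP[Hx /eqP Ex]] Hk; exists x; subst t; rewrite inE Hx Hk eqxx.
Qed.

Lemma inS_setAdd (Z : {set 'I_r}) k t : (t < r)%N ->
  inS (setAdd Z k) t = inS Z t || (t == k).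
Proof.
move=> Ht; rewrite /inS; apply/existsP/orP.
  case=> x /andP[]; rewrite inE => /orP[Hx|/eqP Hk] /eqP Ex; subst t; last by right; apply/eqP.
  by left; apply/existsP; exists x; rewrite Hx eqxx.
case=> [/existsP[x /andP[Hx /eqP Ex]]|/eqP Hk]; first by exists x; rewrite inE Hx Ex eqxx.
by exists (Ordinal Ht); rewrite inE /= eqxx andbT; apply/orP; right; apply/eqP.
Qed.

(** * Cartan entries from root strings *)

Definition string_vec i j k : vec r := vadd (vscale k%:Z (alpha r i)) (alpha r j).

Definition string_mem (L : seq (vec r)) i j k := string_vec i j k \in L.

Lemma vat_string_vec i j k t : (1 <= t <= r)%N ->
  vat (string_vec i j k) t = k%:Z * (t == i : nat)%:Z + (t == j : nat)%:Z.
Proof. by move=> Ht; rewrite !vatE Ht. Qed.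

Lemma string_vec_support g i j k : (1 <= i <= r)%N -> (1 <= j <= r)%N -> i != j ->
  g = string_vec i j k ->
  [/\ vat g i = k%:Z, vat g j = 1 &
      forall t, (1 <= t <= r)%N -> vat g t = 0 \/ t = i \/ t = j].
Proof.
move=> Hi Hj nij ->; split.
- by rewrite vat_string_vec // eqxx (negbTE nij) mulr1 addr0.
- by rewrite vat_string_vec // eqxx eq_sym (negbTE nij) mulr0 add0r.
move=> t Ht.
case: (eqVneq t i) => [|ti]; first by right; left.
case: (eqVneq t j) => [|tj]; first by right; right.
by left; rewrite vat_string_vec // (negbTE ti) (negbTE tj) mulr0 addr0.
Qed.

Lemma string_memP (L : seq (vec r)) g i j k : g \in L ->
  (forall t, (1 <= t <= r)%N -> vat g t = k%:Z * (t == i : nat)%:Z + (t == j : nat)%:Z) ->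
  string_mem L i j k.
Proof.
move=> Hg H; rewrite /string_mem (_ : string_vec i j k = g) //.
by apply: vec_ext => t Ht; rewrite vat_string_vec // H.
Qed.

Lemma string_mem_lt_bound L i j k : i != j -> (1 <= i <= r)%N ->
  string_mem L i j k -> (k < bound L)%N.
Proof.
move=> nij Hi Hk; have li : (i.-1 < r)%N by lia.
have Hx : string_vec i j k (Ordinal li) = k%:Z.
  rewrite !ffunE /= prednK ?eqxx; last lia.
  by rewrite (negbTE nij) mulr1 addr0.
rewrite /bound ltnS (big_rem _ Hk) /= (bigD1 (Ordinal li)) //= Hx /=.
by rewrite -addnA leq_addr.
Qed.

Lemma cartan_diag (L : seq (vec r)) i : cartan L i i = 2.
Proof. by rewrite /cartan eqxx. Qed.

Lemma eq_cartan L L' i j i' j' : i != j -> i' != j' ->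
  (1 <= i <= r)%N -> (1 <= i' <= r)%N ->
  (forall k, string_mem L i j k = string_mem L' i' j' k) -> cartan L i j = cartan L' i' j'.
Proof.
move=> nij nij' Hi Hi' HL; rewrite /cartan (negbTE nij) (negbTE nij'); congr (- (_%:Z)).
apply/eqP; rewrite eqn_leq; apply/andP; split; apply/bigmax_leqP => k Hk.
  have Hk' : string_mem L' i' j' k by rewrite -HL.
  exact: (leq_bigmax_cond (Ordinal (string_mem_lt_bound nij' Hi' Hk'))).
have Hk' : string_mem L i j k by rewrite HL.
exact: (leq_bigmax_cond (Ordinal (string_mem_lt_bound nij Hi Hk'))).
Qed.

Lemma cartan_max L i j (N : nat) : i != j -> (1 <= i <= r)%N ->
  (forall k, string_mem L i j k -> (k <= N)%N) -> N = 0%N \/ string_mem L i j N ->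
  cartan L i j = - N%:Z.
Proof.
move=> nij Hi Hle HN; rewrite /cartan (negbTE nij); congr (- (_%:Z)).
apply/eqP; rewrite eqn_leq; apply/andP; split; first by apply/bigmax_leqP => k /Hle.
by case: HN => [->//|HN]; exact: (leq_bigmax_cond (Ordinal (string_mem_lt_bound nij Hi HN))).
Qed.

Hypothesis r_ge3 : (3 <= r)%N.

Lemma string_eta k i j a b : (0 < k)%N ->
  (1 <= i <= r)%N -> (1 <= j <= r)%N -> i != j -> (1 <= a <= b)%N -> (b <= r)%N ->
  eta r a b = string_vec i j k ->
  (k = 1 /\ (j = i.+1 \/ i = j.+1) /\ maxn i j <= b)%N.
Proof.
(* the coordinate following min(i, j) lies in the interval [a, b] *)
move=> k0 Hi Hj nij Hab Hb /(string_vec_support Hi Hj nij)[]; move/eqP: nij => nij.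
have Ht : (1 <= (minn i j).+1 <= r)%N by lia.
rewrite !vatE Hi Hj /= => Fi Fj F0.
by have := F0 _ Ht; rewrite !vatE Ht /=; clear F0; lia.
Qed.

Lemma string_eta_pair k i j a b c :
  (1 <= i <= r)%N -> (1 <= j <= r)%N -> i != j -> (1 <= a < b)%N -> (b < r)%N ->
  vadd (eta r a r) (eta r b c) = string_vec i j k -> False.
Proof.
(* the three coordinates a < r - 1 < r are nonzero *)
move=> Hi Hj nij Hab Hb /(string_vec_support Hi Hj nij)[_ _ F0]; move/eqP: nij => nij.
have Ha : (1 <= a <= r)%N by lia.
have Hr1 : (1 <= r - 1 <= r)%N by lia.
have Hr : (1 <= r <= r)%N by lia.
have := F0 _ Ha; have := F0 _ Hr1; have := F0 _ Hr; rewrite !vatE Ha Hr1 Hr /=; clear F0.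
by case=> [|[]] ?; case=> [|[]] ?; lia.
Qed.

Lemma string_Phi_fork k i j a : (0 < k)%N ->
  (1 <= i <= r)%N -> (1 <= j <= r)%N -> i != j -> (1 <= a < r)%N ->
  vadd (eta r a (r - 2)) (alpha r r) = string_vec i j k ->
  (k = 1 /\ (i = r - 2 /\ j = r \/ i = r /\ j = r - 2))%N.
Proof.
move=> k0 Hi Hj nij Ha /(string_vec_support Hi Hj nij)[Fi Fj F0]; move/eqP: nij => nij.
have Hr : (1 <= r <= r)%N by lia.
have Ha' : (1 <= a <= r)%N by lia.
have Ha1 : (1 <= a.+1 <= r)%N by lia.
move: Fi Fj; rewrite !vatE Hi Hj /= => Fi Fj.
(* r is a nonzero coordinate; the other one of i, j lies in [a, r - 2], and
   a, a.+1, r cannot all be among i, j *)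
have Er : r = i \/ r = j.
  by case: (F0 _ Hr) => //; rewrite !vatE Hr /=; clear -r_ge3; lia.
have Ea : a = (r - 2)%N.
  have Ea2 : (a <= r - 2)%N by clear F0; lia.
  move: (F0 _ Ha') (F0 _ Ha1); rewrite !vatE Ha' Ha1 /=; clear -r_ge3 Ha Ea2 Er nij.
  by case=> [|[]] ?; case=> [|[]] ?; lia.
by subst a; clear F0; lia.
Qed.

Lemma string_Phi_double k i j b :
  (1 <= i <= r)%N -> (1 <= j <= r)%N -> i != j -> (1 <= b < r)%N ->
  vadd (eta r b r) (eta r b (r - 2)) = string_vec i j k ->
  (k = 1 /\ b = r - 1 /\ (i = r - 1 /\ j = r \/ i = r /\ j = r - 1))%N.
Proof.
move=> Hi Hj nij Hb /(string_vec_support Hi Hj nij)[Fi _ F0]; move/eqP: nij => nij.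
have Hr : (1 <= r <= r)%N by lia.
have Hr1 : (1 <= r - 1 <= r)%N by lia.
have Hb' : (1 <= b <= r)%N by lia.
(* the nonzero coordinates r - 1 and r must be i and j *)
have Eij : (i = r - 1 /\ j = r \/ i = r /\ j = r - 1)%N.
  move: (F0 _ Hr) (F0 _ Hr1); rewrite !vatE Hr Hr1 /=; clear -r_ge3 Hb nij.
  by case=> [|[]] ?; case=> [|[]] ?; lia.
have Eb : b = (r - 1)%N.
  move: (F0 _ Hb'); rewrite !vatE Hb' /=; clear -r_ge3 Hb Eij.
  by case=> [|[]] ?; lia.
by subst b; move: Fi; rewrite !vatE Hi /=; clear -r_ge3 Eij; lia.
Qed.

Lemma string_Psi_double k i j b :
  (1 <= i <= r)%N -> (1 <= j <= r)%N -> i != j -> (1 <= b < r)%N ->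
  vadd (eta r b r) (eta r b (r - 1)) = string_vec i j k ->
  (k = 2 /\ b = r - 1 /\ i = r - 1 /\ j = r)%N.
Proof.
move=> Hi Hj nij Hb /(string_vec_support Hi Hj nij)[Fi Fj F0]; move/eqP: nij => nij.
have Hr : (1 <= r <= r)%N by lia.
have Hr1 : (1 <= r - 1 <= r)%N by lia.
have Hb' : (1 <= b <= r)%N by lia.
have Eij : (i = r - 1 /\ j = r \/ i = r /\ j = r - 1)%N.
  move: (F0 _ Hr) (F0 _ Hr1); rewrite !vatE Hr Hr1 /=; clear -r_ge3 Hb nij.
  by case=> [|[]] ?; case=> [|[]] ?; lia.
have Eb : b = (r - 1)%N.
  move: (F0 _ Hb'); rewrite !vatE Hb' /=; clear -r_ge3 Hb Eij.
  by case=> [|[]] ?; lia.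
subst b; move: Fi Fj; rewrite !vatE Hi Hj /=; clear -r_ge3 Eij.
by case: Eij => -[-> ->]; lia.
Qed.

Definition bondedPhi (Z : {set 'I_r}) i j : bool :=
  [|| (j == i.+1) && (j < r) || (i == j.+1) && (i < r),
      (i == r - 2) && (j == r) || (i == r) && (j == r - 2)
    | inS Z (r - 1) && ((i == r - 1) && (j == r) || (i == r) && (j == r - 1))]%N.

Lemma string_Phi_le_bond Z k i j : (1 <= i <= r)%N -> (1 <= j <= r)%N -> i != j ->
  string_mem (Phi Z) i j k -> (k <= bondedPhi Z i j)%N.
Proof.
move=> Hi Hj nij; case: k => [//|k] Hk; have k0 := ltn0Sn k.
apply: (@Phi_ind Z (fun g => g = string_vec i j k.+1 -> (k.+1 <= bondedPhi Z i j)%N)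
  _ _ _ _ _ Hk erefl).
- move=> a b Hab Hb /(string_eta k0 Hi Hj nij Hab (ltnW Hb))[-> [Eij Hij]].
  by rewrite /bondedPhi; nat_cases.
- move=> a Ha /(string_Phi_fork k0 Hi Hj nij Ha)[-> Eij].
  by rewrite /bondedPhi; nat_cases.
- by move=> a b Hab Hb /(string_eta_pair Hi Hj nij Hab Hb).
- move=> b Hb HZ /(string_Phi_double Hi Hj nij Hb)[-> [Eb Eij]]; subst b.
  by rewrite /bondedPhi HZ; nat_cases.
Qed.

Lemma bondedPhi_string Z i j : (1 <= i <= r)%N -> (1 <= j <= r)%N ->
  bondedPhi Z i j -> string_mem (Phi Z) i j 1.
Proof.
move=> Hi Hj; case/or3P => [/orP[]|/orP[]|/andP[HZ /orP[]]] /andP[/eqP-> H].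
- apply: (string_memP (g := eta r i i.+1)); first by apply: mem_Phi_eta; lia.
  by move=> t Ht; rewrite !vatE; nat_cases.
- apply: (string_memP (g := eta r j j.+1)); first by apply: mem_Phi_eta; lia.
  by move=> t Ht; rewrite !vatE; nat_cases.
- apply: (string_memP (g := vadd (eta r (r - 2) (r - 2)) (alpha r r))).
    by apply: mem_Phi_fork; lia.
  by move/eqP: H => -> t Ht; rewrite !vatE; nat_cases.
- apply: (string_memP (g := vadd (eta r (r - 2) (r - 2)) (alpha r r))).
    by apply: mem_Phi_fork; lia.
  by move/eqP: H => -> t Ht; rewrite !vatE; nat_cases.
- apply: (string_memP (g := vadd (eta r (r - 1) r) (eta r (r - 1) (r - 2)))).
    by apply: mem_Phi_double => //; lia.
  by move/eqP: H => -> t Ht; rewrite !vatE; nat_cases.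
- apply: (string_memP (g := vadd (eta r (r - 1) r) (eta r (r - 1) (r - 2)))).
    by apply: mem_Phi_double => //; lia.
  by move/eqP: H => -> t Ht; rewrite !vatE; nat_cases.
Qed.

Lemma cartan_Phi Z i j : (1 <= i <= r)%N -> (1 <= j <= r)%N -> i != j ->
  cartan (Phi Z) i j = - (bondedPhi Z i j : nat)%:Z.
Proof.
move=> Hi Hj nij; apply: cartan_max => // [k|]; first exact: string_Phi_le_bond.
by case: (boolP (bondedPhi Z i j)) => [/(bondedPhi_string Hi Hj)|_]; [right | left].
Qed.

Definition bondPsi (Y : {set 'I_r}) i j : nat :=
  (if j == i.+1 then (if (i == r - 1) && inS Y (r - 1) then 2 else 1) else i == j.+1)%N.

Lemma string_Psi_le_bond Y k i j : (1 <= i <= r)%N -> (1 <= j <= r)%N -> i != j ->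
  string_mem (Psi Y) i j k -> (k <= bondPsi Y i j)%N.
Proof.
move=> Hi Hj nij; case: k => [//|k] Hk; have k0 := ltn0Sn k.
apply: (@Psi_ind Y (fun g => g = string_vec i j k.+1 -> (k.+1 <= bondPsi Y i j)%N)
  _ _ _ _ Hk erefl).
- move=> a b Hab Hb /(string_eta k0 Hi Hj nij Hab Hb)[-> [Eij _]].
  by rewrite /bondPsi; nat_cases.
- by move=> a b Hab Hb /(string_eta_pair Hi Hj nij Hab Hb).
- move=> b Hb HY /(string_Psi_double Hi Hj nij Hb)[-> [Eb [Ei Ej]]]; subst b.
  by rewrite /bondPsi HY Ei Ej; nat_cases.
Qed.

Lemma bondPsi_string Y i j : (1 <= i <= r)%N -> (1 <= j <= r)%N -> i != j ->
  bondPsi Y i j = 0%N \/ string_mem (Psi Y) i j (bondPsi Y i j).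
Proof.
move=> Hi Hj /eqP nij; rewrite /bondPsi; case: ifP => [/eqP Ej|_].
  case: ifP => [/andP[/eqP Ei HY]|_]; right.
    apply: (string_memP (g := vadd (eta r (r - 1) r) (eta r (r - 1) (r - 1)))).
      by apply: mem_Psi_double => //; lia.
    by move=> t Ht; rewrite !vatE; nat_cases.
  apply: (string_memP (g := eta r i j)); first by apply: mem_Psi_eta; lia.
  by move=> t Ht; rewrite !vatE; nat_cases.
case: eqP => [Ei|_]; [right | by left].
apply: (string_memP (g := eta r j i)); first by apply: mem_Psi_eta; lia.
by move=> t Ht; rewrite !vatE; nat_cases.
Qed.

Lemma cartan_Psi Y i j : (1 <= i <= r)%N -> (1 <= j <= r)%N -> i != j ->
  cartan (Psi Y) i j = - (bondPsi Y i j)%:Z.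
Proof.
move=> Hi Hj nij; apply: cartan_max => // [k|]; first exact: string_Psi_le_bond.
exact: bondPsi_string.
Qed.

(** * The reflections *)

Definition reflect_by i (c : int) (v : vec r) : vec r := [ffun l => v l - c * alpha r i l].

Definition pairing (L : seq (vec r)) i (v : vec r) : int :=
  \sum_(m : 'I_r) cartan L i m.+1 * v m.

Lemma sigmaE (L : seq (vec r)) i v : sigma L i v = reflect_by i (pairing L i v) v.
Proof. by []. Qed.

Lemma vat_reflect_by i c (v : vec r) t :
  vat (reflect_by i c v) t = vat v t - c * vat (alpha r i) t.
Proof.
rewrite /vat; case: insubP => //= *; rewrite ?mulr0 ?subr0 //.
by case: eqP; rewrite ?ffunE ?mulr0 ?subr0.
Qed.

Lemma sum_vat (v : vec r) t : \sum_(m : 'I_r) (m.+1 == t : nat)%:Z * v m = vat v t.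
Proof.
rewrite /vat; case: t => [|t] /=.
  by rewrite big1 => [|m _]; [case: insubP | rewrite mul0r].
case: insubP => [l lt E|nlt] /=.
  rewrite (bigD1 l) //= E eqxx mul1r big1 ?addr0 // => m nml.
  case: eqP => [[Em]|]; last by rewrite mul0r.
  by case/eqP: nml; apply: val_inj; rewrite /= Em E.
rewrite big1 // => m _; case: eqP => [[Em]|]; last by rewrite mul0r.
by move: nlt; rewrite -Em ltn_ord.
Qed.

Lemma pairing_sparse (L : seq (vec r)) i (cs : seq (int * nat)) (v : vec r) :
  (forall j, (1 <= j <= r)%N -> cartan L i j = \sum_(p <- cs) p.1 * (j == p.2 : nat)%:Z) ->
  pairing L i v = \sum_(p <- cs) p.1 * vat v p.2.
Proof.
move=> H; rewrite /pairing.
under eq_bigr => m _ do rewrite H ?ltn_ord // mulr_suml.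
rewrite exchange_big; apply: eq_bigr => p _.
by rewrite -sum_vat mulr_sumr; apply: eq_bigr => m _; rewrite mulrA.
Qed.

Lemma pairing_vopp (L : seq (vec r)) i v : pairing L i (vopp v) = - pairing L i v.
Proof. by rewrite /pairing -sumrN; apply: eq_bigr => m _; rewrite ffunE mulrN. Qed.

Lemma sigma_vopp (L : seq (vec r)) i v : sigma L i (vopp v) = vopp (sigma L i v).
Proof. by apply/ffunP => l; rewrite !sigmaE !ffunE pairing_vopp; ring. Qed.

Lemma pairing_alpha (L : seq (vec r)) i : (1 <= i <= r)%N -> pairing L i (alpha r i) = 2.
Proof.
move=> Hi; rewrite /pairing (eq_bigr (fun m : 'I_r =>
  (m.+1 == i : nat)%:Z * [ffun l : 'I_r => cartan L i l.+1] m)) => [|m _].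
  by rewrite sum_vat (vat_ffun (fun t => cartan L i t)) Hi cartan_diag.
by rewrite !ffunE mulrC.
Qed.

Lemma pairing_reflect_by (L : seq (vec r)) i c v : (1 <= i <= r)%N ->
  pairing L i (reflect_by i c v) = pairing L i v - c * 2.
Proof.
move=> Hi; rewrite -(pairing_alpha L Hi) /pairing mulr_sumr -sumrB.
by apply: eq_bigr => m _; rewrite ffunE; ring.
Qed.

Lemma sigmaK (L : seq (vec r)) i : (1 <= i <= r)%N -> involutive (sigma L i).
Proof.
by move=> Hi v; rewrite !sigmaE pairing_reflect_by //; apply/ffunP => l; rewrite !ffunE; ring.
Qed.

Definition pairing_Phi_low i (v : vec r) : int :=
  2 * vat v i - vat v i.+1 - ((1 < i)%N : nat)%:Z * vat v i.-1
  - ((i == r - 2)%N : nat)%:Z * vat v r.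

Definition pairing_Phi_top (Z : {set 'I_r}) (v : vec r) : int :=
  2 * vat v (r - 1) - vat v (r - 2) - (inS Z (r - 1) : nat)%:Z * vat v r.

Definition pairing_Psi_low i (v : vec r) : int :=
  2 * vat v i - vat v i.+1 - ((1 < i)%N : nat)%:Z * vat v i.-1.

Definition pairing_Psi_top (Y : {set 'I_r}) (v : vec r) : int :=
  2 * vat v (r - 1) - vat v (r - 2) - (1 + (inS Y (r - 1) : nat)%:Z) * vat v r.

Definition pairing_Psi_last (v : vec r) : int := 2 * vat v r - vat v (r - 1).

Lemma sigma_Phi_low Z i v : (1 <= i <= r - 2)%N ->
  sigma (Phi Z) i v = reflect_by i (pairing_Phi_low i v) v.
Proof.
move=> Hi; rewrite sigmaE (pairing_sparse (cs := [:: (2, i); (-1, i.+1);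
  (- ((1 < i)%N : nat)%:Z, i.-1); (- ((i == r - 2)%N : nat)%:Z, r)])) => [|j Hj].
  by rewrite !big_cons big_nil /=; congr reflect_by; rewrite /pairing_Phi_low; ring.
rewrite !big_cons big_nil /=; case: (eqVneq j i) => [->|/eqP nji].
  by rewrite cartan_diag; nat_cases.
by rewrite cartan_Phi // ?(eq_sym i) /bondedPhi; [nat_cases | lia | apply/eqP].
Qed.

Lemma sigma_Phi_top Z v : sigma (Phi Z) (r - 1) v = reflect_by (r - 1) (pairing_Phi_top Z v) v.
Proof.
rewrite sigmaE (pairing_sparse (cs := [:: (2, (r - 1)%N); (-1, (r - 2)%N);
  (- (inS Z (r - 1) : nat)%:Z, r)])) => [|j Hj].
  by rewrite !big_cons big_nil /=; congr reflect_by; rewrite /pairing_Phi_top; ring.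
rewrite !big_cons big_nil /=; case: (eqVneq j (r - 1)%N) => [->|/eqP nji].
  by rewrite cartan_diag; nat_cases.
by rewrite cartan_Phi // ?(eq_sym (r - 1)%N) /bondedPhi; [nat_cases | lia | apply/eqP].
Qed.

Lemma sigma_Psi_low Y i v : (1 <= i <= r - 2)%N ->
  sigma (Psi Y) i v = reflect_by i (pairing_Psi_low i v) v.
Proof.
move=> Hi; rewrite sigmaE (pairing_sparse (cs := [:: (2, i); (-1, i.+1);
  (- ((1 < i)%N : nat)%:Z, i.-1)])) => [|j Hj].
  by rewrite !big_cons big_nil /=; congr reflect_by; rewrite /pairing_Psi_low; ring.
rewrite !big_cons big_nil /=; case: (eqVneq j i) => [->|/eqP nji].
  by rewrite cartan_diag; nat_cases.
by rewrite cartan_Psi // ?(eq_sym i) /bondPsi; [nat_cases | lia | apply/eqP].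
Qed.

Lemma sigma_Psi_top Y v : sigma (Psi Y) (r - 1) v = reflect_by (r - 1) (pairing_Psi_top Y v) v.
Proof.
rewrite sigmaE (pairing_sparse (cs := [:: (2, (r - 1)%N); (-1, (r - 2)%N);
  (- (1 + (inS Y (r - 1) : nat)%:Z), r)])) => [|j Hj].
  by rewrite !big_cons big_nil /=; congr reflect_by; rewrite /pairing_Psi_top; ring.
rewrite !big_cons big_nil /=; case: (eqVneq j (r - 1)%N) => [->|/eqP nji].
  by rewrite cartan_diag; nat_cases.
by rewrite cartan_Psi // ?(eq_sym (r - 1)%N) /bondPsi; [nat_cases | lia | apply/eqP].
Qed.

Lemma sigma_Psi_last Y v : sigma (Psi Y) r v = reflect_by r (pairing_Psi_last v) v.
Proof.
rewrite sigmaE (pairing_sparse (cs := [:: (2, r); (-1, (r - 1)%N)])) => [|j Hj].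
  by rewrite !big_cons big_nil /=; congr reflect_by; rewrite /pairing_Psi_last; ring.
rewrite !big_cons big_nil /=; case: (eqVneq j r) => [->|/eqP nji].
  by rewrite cartan_diag; nat_cases.
by rewrite cartan_Psi // ?(eq_sym r) /bondPsi; [nat_cases | lia | apply/eqP].
Qed.

Lemma sigma_pm_sub (L L' : seq (vec r)) i :
  {in L, forall v, sigma L i v \in pm L'} -> {in pm L, forall v, sigma L i v \in pm L'}.
Proof.
by move=> H v; elim/pm_ind => w /H; rewrite ?sigma_vopp // => /mem_pm_vopp.
Qed.

Lemma sigmaPM_eq_pm (L L' : seq (vec r)) i : (1 <= i <= r)%N -> sigma L i =1 sigma L' i ->
  {in L, forall v, sigma L i v \in pm L'} -> {in L', forall v, sigma L' i v \in pm L} ->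
  sigmaPM L i =i pm L'.
Proof.
move=> Hi Es H1 H2 x; apply/mapP/idP => [[v /(sigma_pm_sub H1) Hv ->] // | Hx].
by exists (sigma L' i x); [exact: sigma_pm_sub H2 x Hx | rewrite Es sigmaK].
Qed.

Lemma sigmaPM_stable (L : seq (vec r)) i : (1 <= i <= r)%N ->
  {in L, forall v, sigma L i v \in pm L} -> sigmaPM L i =i pm L.
Proof. by move=> Hi H; apply: sigmaPM_eq_pm. Qed.

Lemma sigma_eq_mem (L1 L2 : seq (vec r)) i : L1 =i L2 -> (1 <= i <= r)%N ->
  sigma L1 i =1 sigma L2 i.
Proof.
move=> E Hi v; rewrite !sigmaE /pairing; congr reflect_by; apply: eq_bigr => m _.
have [->|nim] := eqVneq i m.+1; first by rewrite !cartan_diag.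
by congr (_ * _); apply: eq_cartan => // k; rewrite /string_mem E.
Qed.

Lemma sigmaPM_eq_mem (L1 L2 : seq (vec r)) i : L1 =i L2 -> (1 <= i <= r)%N ->
  sigmaPM L1 i =i sigmaPM L2 i.
Proof.
move=> E Hi x; rewrite /sigmaPM (eq_map (sigma_eq_mem E Hi)).
exact: eq_mem_map (pm_eq_mem E) x.
Qed.

(** * Exchanging the last two coordinates *)

Lemma swapn_low i : (i <= r - 2)%N -> swapn (r - 1) i = i.
Proof. by move=> H; rewrite /swapn; nat_cases. Qed.

Lemma swapn_top : swapn (r - 1) (r - 1) = r.
Proof. by rewrite /swapn; nat_cases. Qed.

Lemma swapn_last : swapn (r - 1) r = (r - 1)%N.
Proof. by rewrite /swapn; nat_cases. Qed.

Lemma vat_xch (v : vec r) t : vat (xch v) t = vat v (swapn (r - 1) t).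
Proof.
rewrite /xch (vat_ffun (fun t => vat v (swapn (r - 1) t))).
by case: ifP => // /negbT H; rewrite vat_out //; move: H; rewrite /swapn; nat_cases.
Qed.

Lemma xchK : involutive (@xch r).
Proof. by move=> v; apply: vec_ext => t _; rewrite !vat_xch swapnK. Qed.

Lemma xch_vopp (v : vec r) : xch (vopp v) = vopp (xch v).
Proof. by apply: vec_ext => t _; rewrite !(vat_xch, vat_vopp). Qed.

Lemma mem_map_xch (L : seq (vec r)) v : (v \in map (@xch r) L) = (xch v \in L).
Proof. by rewrite -{1}(xchK v) (mem_map (can_inj xchK)). Qed.

Lemma cartan_map_xch (L : seq (vec r)) i j : (1 <= i <= r)%N -> (1 <= j <= r)%N ->
  cartan (map (@xch r) L) i j = cartan L (swapn (r - 1) i) (swapn (r - 1) j).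
Proof.
move=> Hi Hj; have [->|nij] := eqVneq i j; first by rewrite !cartan_diag.
apply: eq_cartan => //.
- by apply: contra nij => /eqP/(can_inj (swapnK _))/eqP.
- by rewrite /swapn; nat_cases.
move=> k; rewrite /string_mem mem_map_xch; congr (_ \in L).
by apply: vec_ext => t Ht; rewrite vat_xch !vatE /swapn; nat_cases.
Qed.

Lemma pairing_map_xch (L : seq (vec r)) i v : (1 <= i <= r)%N ->
  pairing (map (@xch r) L) i (xch v) = pairing L (swapn (r - 1) i) v.
Proof.
move=> Hi; rewrite /pairing.
have Hp (m : 'I_r) : ((swapn (r - 1) m.+1).-1 < r)%N.
  by have := ltn_ord m; rewrite /swapn; nat_cases.
pose p (m : 'I_r) := Ordinal (Hp m).
have pS (m : 'I_r) : (p m).+1 = swapn (r - 1) m.+1 by rewrite /= /swapn; nat_cases.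
have p_inj : injective p.
  move=> m1 m2 /(congr1 (fun x : 'I_r => (val x).+1)); rewrite !pS.
  by move/(can_inj (swapnK _)) => [] /val_inj.
rewrite [RHS](reindex_inj p_inj); apply: eq_bigr => m _.
rewrite cartan_map_xch ?ltn_ord // -!vat_ord pS vat_xch.
by rewrite -pS vat_ord.
Qed.

Lemma sigma_map_xch (L : seq (vec r)) i v : (1 <= i <= r)%N ->
  sigma (map (@xch r) L) i (xch v) = xch (sigma L (swapn (r - 1) i) v).
Proof.
move=> Hi; rewrite !sigmaE pairing_map_xch //; apply: vec_ext => t Ht.
rewrite vat_xch !vat_reflect_by vat_xch; congr (_ - _ * _).
by rewrite !vatE /swapn; nat_cases.
Qed.

Lemma pm_map_xch (L : seq (vec r)) : pm (map (@xch r) L) = map (@xch r) (pm L).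
Proof.
by rewrite /pm map_cat -!map_comp; congr (_ ++ _); apply: eq_map => v /=; rewrite xch_vopp.
Qed.

Lemma sigmaPM_map_xch (L M : seq (vec r)) i : (1 <= i <= r)%N ->
  sigmaPM L (swapn (r - 1) i) =i pm M ->
  sigmaPM (map (@xch r) L) i =i pm (map (@xch r) M).
Proof.
move=> Hi H; rewrite /sigmaPM pm_map_xch pm_map_xch -map_comp.
rewrite (eq_map (fun v => sigma_map_xch L v Hi)) map_comp.
exact: eq_mem_map.
Qed.

Lemma xch_mem_Phi (Z : {set 'I_r}) v : v \in Phi Z -> xch v \in Phi Z.
Proof.
elim/Phi_ind => [a b Hab Hb | a Ha | a b Hab Hb | b Hb HZ].
- have [-> | Hb1] := eqVneq b (r - 1)%N.
    rewrite (_ : xch _ = vadd (eta r a (r - 2)) (alpha r r)); first by apply: mem_Phi_fork; lia.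
    by apply: vec_ext => t Ht; rewrite vat_xch !vatE /swapn; nat_cases.
  rewrite (_ : xch _ = eta r a b); first by apply: mem_Phi_eta; lia.
  by apply: vec_ext => t Ht; rewrite vat_xch !vatE /swapn; nat_cases.
- rewrite (_ : xch _ = eta r a (r - 1)); first by apply: mem_Phi_eta; lia.
  by apply: vec_ext => t Ht; rewrite vat_xch !vatE /swapn; nat_cases.
- rewrite (_ : xch _ = vadd (eta r a r) (eta r b (r - 2))); first by apply: mem_Phi_pair; lia.
  by apply: vec_ext => t Ht; rewrite vat_xch !vatE /swapn; nat_cases.
- rewrite (_ : xch _ = vadd (eta r b r) (eta r b (r - 2))); first exact: mem_Phi_double.
  by apply: vec_ext => t Ht; rewrite vat_xch !vatE /swapn; nat_cases.
Qed.

Lemma map_xch_Phi (Z : {set 'I_r}) : map (@xch r) (Phi Z) =i Phi Z.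
Proof.
move=> v; rewrite mem_map_xch; apply/idP/idP => [/xch_mem_Phi|/xch_mem_Phi //].
by rewrite xchK.
Qed.

Lemma pm_map_xch_Phi (Z : {set 'I_r}) : pm (map (@xch r) (Phi Z)) =i pm (Phi Z).
Proof. exact/pm_eq_mem/map_xch_Phi. Qed.

(** * Images of the roots *)

Ltac pairing_is c := match goal with |- context [reflect_by _ ?f _] =>
  rewrite (_ : f = (c : int));
  [| by rewrite /pairing_Phi_low /pairing_Phi_top /pairing_Psi_low /pairing_Psi_top
          /pairing_Psi_last !vatE; nat_cases] end.

Ltac mem_root := first
  [ apply: mem_Phi_eta; lia | apply: mem_Phi_fork; lia | apply: mem_Phi_pair; lia
  | apply: mem_Psi_eta; lia | apply: mem_Psi_pair; lia ].

(* [reflects_to c g] solves [reflect_by i f v \in pm L] when the pairing [f]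
   evaluates to [c] and [v - c alpha_i = g]; it leaves [g \in L] unless [g]
   has one of the shapes handled by [mem_root]. *)
Tactic Notation "reflects_to" uconstr(c) constr(g) :=
  pairing_is c; apply: (mem_pm_vat (g := g));
  [try mem_root | by move=> t Ht; rewrite vat_reflect_by !vatE; nat_cases].

Tactic Notation "reflects_to_opp" uconstr(c) constr(g) :=
  pairing_is c; apply: (mem_pm_vat_opp (g := g));
  [try mem_root | by move=> t Ht; rewrite vat_reflect_by !vatE; nat_cases].

Lemma sigma_Phi_low_mem (Z : {set 'I_r}) i : (1 <= i <= r - 2)%N ->
  {in Phi Z, forall v, sigma (Phi Z) i v \in pm (Phi (tsp i Z))}.
Proof.
move=> Hi v; elim/Phi_ind => [a b Hab Hb|a Ha|a b Hab Hb|b Hb HZ]; rewrite sigma_Phi_low //.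
- case: (ltngtP a i) => Hai.
  + case: (ltngtP b.+1 i) => Hbi.
    * reflects_to 0 (eta r a b).
    * case: (eqVneq b i) => Hb2.
      - subst b; reflects_to 1 (eta r a i.-1).
      - reflects_to 0 (eta r a b).
    * reflects_to (-1) (eta r a i).
  + case: (eqVneq a i.+1) => Ha2.
    * reflects_to (-1) (eta r i b).
    * reflects_to 0 (eta r a b).
  + subst a; case: (eqVneq b i) => Hb2.
    * subst b; reflects_to_opp 2 (eta r i i).
    * reflects_to 1 (eta r i.+1 b).
- case: (eqVneq a i) => Ha2.
  + subst a; reflects_to 1 (vadd (eta r i.+1 (r - 2)) (alpha r r)).
  + case: (eqVneq a i.+1) => Ha3.
    * subst a; reflects_to (-1) (vadd (eta r i (r - 2)) (alpha r r)).
    * reflects_to 0 (vadd (eta r a (r - 2)) (alpha r r)).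
- case: (boolP ((a == i) && (b == i.+1))) => [/andP[/eqP Ea /eqP Eb]|Hn].
    subst a b; reflects_to 0 (vadd (eta r i r) (eta r i.+1 (r - 2))).
  case: (eqVneq a i) => Ha2.
    subst a; reflects_to 1 (vadd (eta r i.+1 r) (eta r b (r - 2))).
  case: (eqVneq a i.+1) => Ha3.
    subst a; reflects_to (-1) (vadd (eta r i r) (eta r b (r - 2))).
  case: (eqVneq b i) => Hb2.
    subst b; reflects_to 1 (vadd (eta r a r) (eta r i.+1 (r - 2))).
  case: (eqVneq b i.+1) => Hb3.
    subst b; reflects_to (-1) (vadd (eta r a r) (eta r i (r - 2))).
  reflects_to 0 (vadd (eta r a r) (eta r b (r - 2))).
- case: (eqVneq b i) => Hb2.
    subst b; reflects_to 2 (vadd (eta r i.+1 r) (eta r i.+1 (r - 2))).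
    apply: mem_Phi_double; first lia.
    by rewrite inS_tsp; try lia; rewrite /swapn eqn_leq ltnn /= eqxx.
  case: (eqVneq b i.+1) => Hb3.
    subst b; reflects_to (-2) (vadd (eta r i r) (eta r i (r - 2))).
    apply: mem_Phi_double; first lia.
    by rewrite inS_tsp; try lia; rewrite /swapn eqxx.
  reflects_to 0 (vadd (eta r b r) (eta r b (r - 2))).
  apply: mem_Phi_double; first lia.
  by rewrite inS_tsp; try lia; rewrite /swapn (negbTE Hb2) (negbTE Hb3).
Qed.

Lemma sigma_Psi_low_mem (Y : {set 'I_r}) i : (1 <= i <= r - 2)%N ->
  {in Psi Y, forall v, sigma (Psi Y) i v \in pm (Psi (tsp i Y))}.
Proof.
move=> Hi v; elim/Psi_ind => [a b Hab Hb|a b Hab Hb|b Hb HY]; rewrite sigma_Psi_low //.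
- case: (ltngtP a i) => Hai.
  + case: (ltngtP b.+1 i) => Hbi.
    * reflects_to 0 (eta r a b).
    * case: (eqVneq b i) => Hb2.
      - subst b; reflects_to 1 (eta r a i.-1).
      - reflects_to 0 (eta r a b).
    * reflects_to (-1) (eta r a i).
  + case: (eqVneq a i.+1) => Ha2.
    * reflects_to (-1) (eta r i b).
    * reflects_to 0 (eta r a b).
  + subst a; case: (eqVneq b i) => Hb2.
    * subst b; reflects_to_opp 2 (eta r i i).
    * reflects_to 1 (eta r i.+1 b).
- case: (boolP ((a == i) && (b == i.+1))) => [/andP[/eqP Ea /eqP Eb]|Hn].
    subst a b; reflects_to 0 (vadd (eta r i r) (eta r i.+1 (r - 1))).
  case: (eqVneq a i) => Ha2.
    subst a; reflects_to 1 (vadd (eta r i.+1 r) (eta r b (r - 1))).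
  case: (eqVneq a i.+1) => Ha3.
    subst a; reflects_to (-1) (vadd (eta r i r) (eta r b (r - 1))).
  case: (eqVneq b i) => Hb2.
    subst b; reflects_to 1 (vadd (eta r a r) (eta r i.+1 (r - 1))).
  case: (eqVneq b i.+1) => Hb3.
    subst b; reflects_to (-1) (vadd (eta r a r) (eta r i (r - 1))).
  reflects_to 0 (vadd (eta r a r) (eta r b (r - 1))).
- case: (eqVneq b i) => Hb2.
    subst b; reflects_to 2 (vadd (eta r i.+1 r) (eta r i.+1 (r - 1))).
    apply: mem_Psi_double; first lia.
    by rewrite inS_tsp; try lia; rewrite /swapn eqn_leq ltnn /= eqxx.
  case: (eqVneq b i.+1) => Hb3.
    subst b; reflects_to (-2) (vadd (eta r i r) (eta r i (r - 1))).
    apply: mem_Psi_double; first lia.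
    by rewrite inS_tsp; try lia; rewrite /swapn eqxx.
  reflects_to 0 (vadd (eta r b r) (eta r b (r - 1))).
  apply: mem_Psi_double; first lia.
  by rewrite inS_tsp; try lia; rewrite /swapn (negbTE Hb2) (negbTE Hb3).
Qed.

Lemma sigma_Phi_top_mem_notin (Z : {set 'I_r}) : ~~ inS Z (r - 1) ->
  {in Phi Z, forall v, sigma (Phi Z) (r - 1) v \in pm (Phi Z)}.
Proof.
move=> Hn v; elim/Phi_ind => [a b Hab Hb|a Ha|a b Hab Hb|b Hb HZ];
  rewrite sigma_Phi_top /pairing_Phi_top (negbTE Hn).
- case: (eqVneq b (r - 1)%N) => Hb2.
    subst b; case: (eqVneq a (r - 1)%N) => Ha2.
      subst a; reflects_to_opp 2 (eta r (r - 1) (r - 1)).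
    reflects_to 1 (eta r a (r - 2)).
  case: (eqVneq b (r - 2)%N) => Hb3.
    subst b; reflects_to (-1) (eta r a (r - 1)).
  reflects_to 0 (eta r a b).
- case: (eqVneq a (r - 1)%N) => Ha2.
    subst a; reflects_to 0 (vadd (eta r (r - 1) (r - 2)) (alpha r r)).
  reflects_to (-1) (vadd (eta r a r) (eta r (r - 1) (r - 2))).
- case: (eqVneq b (r - 1)%N) => Hb2.
    subst b; reflects_to 1 (vadd (eta r a (r - 2)) (alpha r r)).
  reflects_to 0 (vadd (eta r a r) (eta r b (r - 2))).
- have Hb2 : b != (r - 1)%N by apply/eqP => E; subst b; rewrite HZ in Hn.
  reflects_to 0 (vadd (eta r b r) (eta r b (r - 2))).
  by apply: (mem_Phi_double _ HZ); lia.
Qed.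

Lemma sigma_Phi_top_mem_in (Z : {set 'I_r}) : inS Z (r - 1) ->
  {in Phi Z, forall v, sigma (Phi Z) (r - 1) v \in pm (Psi (setDel Z (r - 1)))}.
Proof.
move=> HZ1 v; elim/Phi_ind => [a b Hab Hb|a Ha|a b Hab Hb|b Hb HZ];
  rewrite sigma_Phi_top /pairing_Phi_top HZ1.
- case: (eqVneq b (r - 1)%N) => Hb2.
    subst b; case: (eqVneq a (r - 1)%N) => Ha2.
      subst a; reflects_to_opp 2 (eta r (r - 1) (r - 1)).
    reflects_to 1 (eta r a (r - 2)).
  case: (eqVneq b (r - 2)%N) => Hb3.
    subst b; reflects_to (-1) (eta r a (r - 1)).
  reflects_to 0 (eta r a b).
- case: (eqVneq a (r - 1)%N) => Ha2.
    subst a; reflects_to (-1) (eta r (r - 1) r).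
  reflects_to (-2) (vadd (eta r a r) (eta r (r - 1) (r - 1))).
- case: (eqVneq b (r - 1)%N) => Hb2.
    subst b; reflects_to 0 (eta r a r).
  reflects_to (-1) (vadd (eta r a r) (eta r b (r - 1))).
- case: (eqVneq b (r - 1)%N) => Hb2.
    subst b; reflects_to 1 (eta r r r).
  reflects_to (-1) (vadd (eta r b r) (eta r b (r - 1))).
  apply: mem_Psi_double; first lia.
  by rewrite inS_setDel HZ Hb2.
Qed.

Lemma sigma_Psi_top_mem_notin (Y : {set 'I_r}) : ~~ inS Y (r - 1) ->
  {in Psi Y, forall v, sigma (Psi Y) (r - 1) v \in pm (Phi (setAdd Y (r - 1)))}.
Proof.
move=> Hn v; elim/Psi_ind => [a b Hab Hb|a b Hab Hb|b Hb HY];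
  rewrite sigma_Psi_top /pairing_Psi_top (negbTE Hn).
- case: (eqVneq b r) => Hbr.
    subst b; case: (eqVneq a r) => Har.
      subst a; reflects_to (-1) (vadd (eta r (r - 1) r) (eta r (r - 1) (r - 2))).
      apply: mem_Phi_double; first lia.
      by rewrite inS_setAdd ?eqxx ?orbT //; lia.
    case: (eqVneq a (r - 1)%N) => Ha2.
      subst a; reflects_to 1 (vadd (eta r (r - 1) (r - 2)) (alpha r r)).
    reflects_to 0 (vadd (eta r a r) (eta r (r - 1) (r - 2))).
  have {Hb Hbr} Hb : (b < r)%N by lia.
  case: (eqVneq b (r - 1)%N) => Hb2.
    subst b; case: (eqVneq a (r - 1)%N) => Ha2.
      subst a; reflects_to_opp 2 (eta r (r - 1) (r - 1)).
    reflects_to 1 (eta r a (r - 2)).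
  case: (eqVneq b (r - 2)%N) => Hb3.
    subst b; reflects_to (-1) (eta r a (r - 1)).
  reflects_to 0 (eta r a b).
- case: (eqVneq b (r - 1)%N) => Hb2.
    subst b; reflects_to 2 (vadd (eta r a (r - 2)) (alpha r r)).
  reflects_to 1 (vadd (eta r a r) (eta r b (r - 2))).
- have Hb2 : b != (r - 1)%N by apply/eqP => E; subst b; rewrite HY in Hn.
  reflects_to 1 (vadd (eta r b r) (eta r b (r - 2))).
  apply: mem_Phi_double; first lia.
  by rewrite inS_setAdd ?HY //; lia.
Qed.

Lemma sigma_Psi_last_mem (Y : {set 'I_r}) :
  {in Psi Y, forall v, sigma (Psi Y) r v \in pm (Psi Y)}.
Proof.
move=> v; elim/Psi_ind => [a b Hab Hb|a b Hab Hb|b Hb HY]; rewrite sigma_Psi_last.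
- case: (eqVneq b r) => Hbr.
    subst b; case: (eqVneq a r) => Har.
      subst a; reflects_to_opp 2 (eta r r r).
    reflects_to 1 (eta r a (r - 1)).
  case: (eqVneq b (r - 1)%N) => Hb2.
    subst b; reflects_to (-1) (eta r a r).
  reflects_to 0 (eta r a b).
- reflects_to 0 (vadd (eta r a r) (eta r b (r - 1))).
- reflects_to 0 (vadd (eta r b r) (eta r b (r - 1))).
by apply: (mem_Psi_double _ HY); lia.
Qed.

Lemma sigma_Psi_top_mem_in (Y : {set 'I_r}) : inS Y (r - 1) ->
  {in Psi Y, forall v, sigma (Psi Y) (r - 1) v \in pm (Psi Y)}.
Proof.
move=> HY1 v; elim/Psi_ind => [a b Hab Hb|a b Hab Hb|b Hb HY];
  rewrite sigma_Psi_top /pairing_Psi_top HY1.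
- case: (eqVneq b r) => Hbr.
    subst b; case: (eqVneq a r) => Har.
      subst a; reflects_to (-2) (vadd (eta r (r - 1) r) (eta r (r - 1) (r - 1))).
      by apply: (mem_Psi_double _ HY1); lia.
    case: (eqVneq a (r - 1)%N) => Ha2.
      subst a; reflects_to 0 (eta r (r - 1) r).
    reflects_to (-1) (vadd (eta r a r) (eta r (r - 1) (r - 1))).
  have {Hb Hbr} Hb : (b < r)%N by lia.
  case: (eqVneq b (r - 1)%N) => Hb2.
    subst b; case: (eqVneq a (r - 1)%N) => Ha2.
      subst a; reflects_to_opp 2 (eta r (r - 1) (r - 1)).
    reflects_to 1 (eta r a (r - 2)).
  case: (eqVneq b (r - 2)%N) => Hb3.
    subst b; reflects_to (-1) (eta r a (r - 1)).
  reflects_to 0 (eta r a b).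
- case: (eqVneq b (r - 1)%N) => Hb2.
    subst b; reflects_to 1 (eta r a r).
  reflects_to 0 (vadd (eta r a r) (eta r b (r - 1))).
- case: (eqVneq b (r - 1)%N) => Hb2.
    subst b; reflects_to 2 (eta r r r).
  reflects_to 0 (vadd (eta r b r) (eta r b (r - 1))).
  by apply: (mem_Psi_double _ HY); lia.
Qed.

(** * The reflected root systems *)

Lemma sigmaPM_Phi_low (Z : {set 'I_r}) i : (1 <= i <= r - 2)%N ->
  sigmaPM (Phi Z) i =i pm (Phi (tsp i Z)).
Proof.
move=> Hi; have tspK : Phi (tsp i (tsp i Z)) = Phi Z.
  by apply: eq_Phi => t Ht; rewrite inS_tspK //; lia.
apply: sigmaPM_eq_pm; [lia | by move=> v; rewrite !sigma_Phi_low | exact: sigma_Phi_low_mem |].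
by move=> v /(sigma_Phi_low_mem Hi); rewrite tspK.
Qed.

Lemma sigmaPM_Psi_low (Y : {set 'I_r}) i : (1 <= i <= r - 2)%N ->
  sigmaPM (Psi Y) i =i pm (Psi (tsp i Y)).
Proof.
move=> Hi; have tspK : Psi (tsp i (tsp i Y)) = Psi Y.
  by apply: eq_Psi => t Ht; rewrite inS_tspK //; lia.
apply: sigmaPM_eq_pm; [lia | by move=> v; rewrite !sigma_Psi_low | exact: sigma_Psi_low_mem |].
by move=> v /(sigma_Psi_low_mem Hi); rewrite tspK.
Qed.

Lemma sigmaPM_Psi'_low (Y : {set 'I_r}) i : (1 <= i <= r - 2)%N ->
  sigmaPM (Psi' Y) i =i pm (Psi' (tsp i Y)).
Proof.
move=> Hi; apply: sigmaPM_map_xch; first lia.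
by rewrite swapn_low; [exact: sigmaPM_Psi_low | lia].
Qed.

Lemma sigmaPM_Phi_top_notin (Z : {set 'I_r}) : ~~ inS Z (r - 1) ->
  sigmaPM (Phi Z) (r - 1) =i pm (Phi Z).
Proof. by move=> HZ; apply: sigmaPM_stable (sigma_Phi_top_mem_notin HZ); lia. Qed.

Lemma sigmaPM_Phi_top_in (Z : {set 'I_r}) : inS Z (r - 1) ->
  sigmaPM (Phi Z) (r - 1) =i pm (Psi (setDel Z (r - 1))).
Proof.
move=> HZ; have HZ' : ~~ inS (setDel Z (r - 1)) (r - 1) by rewrite inS_setDel eqxx andbF.
have addDel : Phi (setAdd (setDel Z (r - 1)) (r - 1)) = Phi Z.
  apply: eq_Phi => t Ht; rewrite inS_setAdd // inS_setDel.
  by case: (eqVneq t (r - 1)%N) => [->|]; rewrite ?HZ ?orbT ?andbT ?orbF.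
apply: sigmaPM_eq_pm; first lia.
- move=> v; rewrite sigma_Phi_top sigma_Psi_top.
  by rewrite /pairing_Phi_top /pairing_Psi_top HZ (negbTE HZ').
- exact: sigma_Phi_top_mem_in.
- by move=> v /(sigma_Psi_top_mem_notin HZ'); rewrite addDel.
Qed.

Lemma sigmaPM_Phi_last (Z : {set 'I_r}) M : sigmaPM (Phi Z) (r - 1) =i pm M ->
  sigmaPM (Phi Z) r =i pm (map (@xch r) M).
Proof.
have Hr : (1 <= r <= r)%N by lia.
move=> H x; rewrite -(sigmaPM_eq_mem (map_xch_Phi Z) Hr).
by apply: sigmaPM_map_xch; rewrite ?swapn_last.
Qed.

Lemma sigmaPM_Psi_top_notin (Y : {set 'I_r}) : ~~ inS Y (r - 1) ->
  sigmaPM (Psi Y) (r - 1) =i pm (Phi (setAdd Y (r - 1))).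
Proof.
move=> HY; have HY' : inS (setAdd Y (r - 1)) (r - 1) by rewrite inS_setAdd ?eqxx ?orbT //; lia.
have delAdd : Psi (setDel (setAdd Y (r - 1)) (r - 1)) = Psi Y.
  apply: eq_Psi => t Ht; rewrite inS_setDel inS_setAdd //.
  by case: (eqVneq t (r - 1)%N) => [->|]; rewrite ?(negbTE HY) ?andbF ?orbF ?andbT.
apply: sigmaPM_eq_pm; first lia.
- move=> v; rewrite sigma_Phi_top sigma_Psi_top.
  by rewrite /pairing_Phi_top /pairing_Psi_top HY' (negbTE HY).
- exact: sigma_Psi_top_mem_notin.
- by move=> v /(sigma_Phi_top_mem_in HY'); rewrite delAdd.
Qed.

Lemma sigmaPM_Psi_top_in (Y : {set 'I_r}) : inS Y (r - 1) ->
  sigmaPM (Psi Y) (r - 1) =i pm (Psi Y).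
Proof. by move=> HY; apply: sigmaPM_stable (sigma_Psi_top_mem_in HY); lia. Qed.

Lemma sigmaPM_Psi_last (Y : {set 'I_r}) : sigmaPM (Psi Y) r =i pm (Psi Y).
Proof. by apply: sigmaPM_stable (sigma_Psi_last_mem (Y := Y)); lia. Qed.

Lemma sigmaPM_Psi'_top (Y : {set 'I_r}) M : sigmaPM (Psi Y) r =i pm M ->
  sigmaPM (Psi' Y) (r - 1) =i pm (map (@xch r) M).
Proof. by move=> H; apply: sigmaPM_map_xch; rewrite ?swapn_top //; lia. Qed.

Lemma sigmaPM_Psi'_last (Y : {set 'I_r}) M : sigmaPM (Psi Y) (r - 1) =i pm M ->
  sigmaPM (Psi' Y) r =i pm (map (@xch r) M).
Proof. by move=> H; apply: sigmaPM_map_xch; rewrite ?swapn_last //; lia. Qed.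

End Roots.

Local Close Scope ring_scope.

Theorem proposition3p12 (r : nat) (Y Z : {set 'I_r}) :
  (3 <= r)%N ->
  (forall x, x \in Y -> (0 < val x)%N) ->
  (forall x, x \in Z -> (0 < val x)%N) ->
  (#|Y| < #|Z|)%N -> (#|Z| < r)%N ->
  (forall i, (1 <= i <= r - 2)%N ->
     [/\ sigmaPM (Phi Z) i =i pm (Phi (tsp i Z)),
         sigmaPM (Psi Y) i =i pm (Psi (tsp i Y)) &
         sigmaPM (Psi' Y) i =i pm (Psi' (tsp i Y))]) /\
  (~~ inS Z (r - 1) ->
     sigmaPM (Phi Z) (r - 1) =i pm (Phi Z) /\ sigmaPM (Phi Z) r =i pm (Phi Z)) /\
  (inS Z (r - 1) ->
     sigmaPM (Phi Z) (r - 1) =i pm (Psi (setDel Z (r - 1))) /\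
     sigmaPM (Phi Z) r =i pm (Psi' (setDel Z (r - 1)))) /\
  (~~ inS Y (r - 1) ->
     [/\ sigmaPM (Psi Y) (r - 1) =i pm (Phi (setAdd Y (r - 1))),
         sigmaPM (Psi Y) r =i pm (Psi Y),
         sigmaPM (Psi' Y) r =i pm (Phi (setAdd Y (r - 1))) &
         sigmaPM (Psi' Y) (r - 1) =i pm (Psi' Y)]) /\
  (inS Y (r - 1) ->
     [/\ sigmaPM (Psi Y) (r - 1) =i pm (Psi Y),
         sigmaPM (Psi Y) r =i pm (Psi Y),
         sigmaPM (Psi' Y) (r - 1) =i pm (Psi' Y) &
         sigmaPM (Psi' Y) r =i pm (Psi' Y)]).
Proof.
move=> r_ge3 _ _ _ _; have Psi'_top := sigmaPM_Psi'_top r_ge3 (sigmaPM_Psi_last r_ge3 Y).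
split; last split; last split; last split.
- move=> i Hi.
  by split; [exact: sigmaPM_Phi_low | exact: sigmaPM_Psi_low | exact: sigmaPM_Psi'_low].
- move=> HZ; have Htop := sigmaPM_Phi_top_notin r_ge3 HZ.
  by split=> // x; rewrite (sigmaPM_Phi_last r_ge3 Htop) pm_map_xch_Phi.
- move=> HZ; have Htop := sigmaPM_Phi_top_in r_ge3 HZ.
  by split=> //; exact: sigmaPM_Phi_last.
- move=> HY; have Htop := sigmaPM_Psi_top_notin r_ge3 HY.
  split=> //; first exact: sigmaPM_Psi_last.
  by move=> x; rewrite (sigmaPM_Psi'_last r_ge3 Htop) pm_map_xch_Phi.
- move=> HY; have Htop := sigmaPM_Psi_top_in r_ge3 HY.
  by split=> //; [exact: sigmaPM_Psi_last | exact: sigmaPM_Psi'_last].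
Qed.
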